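(* Let $A$ be a complex vector space of dimension $n\ge2$, let $h$ be a symmetric bilinear form on $A$, let $c\in A$ with $h(c,c)=0$ and $h(\cdot,c)\neq0$, and define $x*y=-h(y,c)x+h(x,y)c$. Then $(A,* )$ is isomorphic to $A^{(k)}_{(5)}$ for some $k\in\{0,\dots,n-2\}$, where $A^{(k)}_{(5)}$ has basis $e_1,\dots,e_n$ and nonzero products of basis vectors $e_2e_1=-e_1$, $e_2e_2=e_2$, $e_je_2=e_j$ ($3\le j\le n$), $e_le_l=e_1$ ($3\le l\le k+2$). *)

From mathcomp Require Import all_boot all_algebra.
From mathcomp Require Import complex.
From mathcomp Require Import Rstruct.

Set Implicit Arguments.
Unset Strict Implicit.
Unset Printing Implicit Defensive.

Import GRing.Theory.
Local Open Scope ring_scope.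

Definition Cplx : numClosedFieldType := Rdefinitions.R[i].

Definition sym_bilinear_form (V : vectType Cplx) (h : V -> V -> Cplx) : Prop :=
  (forall (a : Cplx) (x y z : V), h (a *: x + y) z = a * h x z + h y z) /\
  (forall (a : Cplx) (x y z : V), h z (a *: x + y) = a * h z x + h z y) /\
  (forall x y : V, h x y = h y x).

Definition hc_mul (V : vectType Cplx) (h : V -> V -> Cplx) (c : V) (x y : V) : V :=
  - (h y c) *: x + (h x y) *: c.

(* Structure constants of A^(k)_(5) on basis e_1..e_n, indexed 0-based:
   e_(i+1) e_(j+1) = \sum_l gamma5 k i j l e_(l+1). *)
Definition gamma5 (k i j l : nat) : Cplx :=
  if [&& i == 1%N, j == 0%N & l == 0%N] then -1
  else if [&& i == 1%N, j == 1%N & l == 1%N] then 1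
  else if [&& (2 <= i)%N, j == 1%N & l == i] then 1
  else if [&& (2 <= i)%N, i == j, (i <= k.+1)%N & l == 0%N] then 1
  else 0.

(* Multiplication of A^(k)_(5), realized on coordinate row vectors 'rV_n
   (coordinates w.r.t. the basis e_1..e_n), extended bilinearly. *)
Definition mulA5 (n k : nat) (x y : 'rV[Cplx]_n) : 'rV[Cplx]_n :=
  \row_(l < n) \sum_(i < n) \sum_(j < n) x 0 i * y 0 j * gamma5 k i j l.

Definition alg_iso (V W : vectType Cplx) (mulV : V -> V -> V) (mulW : W -> W -> W)
  (f : V -> W) : Prop :=
  (forall (a : Cplx) (x y : V), f (a *: x + y) = a *: f x + f y) /\
  bijective f /\
  (forall x y : V, f (mulV x y) = mulW (f x) (f y)).

From HB Require Import structures.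
From mathcomp Require Import all_boot all_algebra.
From mathcomp Require Import complex.
From mathcomp Require Import Rstruct.
From mathcomp Require Import ring zify.
From Stdlib Require Import Classical.
Import GRing.Theory Num.Theory.
Local Open Scope ring_scope.
Set Implicit Arguments.
Unset Strict Implicit.

(* Choose e with h(e, c) = -1 and h(e, e) = 0, and let W be the h-orthogonal
   complement of span(c, e), of dimension n - 2.  Over C the restriction of h to
   W has an orthogonal basis t with h(t_i, t_i) = 1 for i < k and 0 otherwise.
   In the basis c, e, t the product is read off from x * y = -h(y,c) x + h(x,y) c:
   c * _ = 0, e c = -c, e e = e, e w = 0, w c = 0, w e = w and w w' = h(w,w') c,
   which are exactly the structure constants of A^(k)_(5). *)

Lemma dimv_cap_lker (K : fieldType) (V : vectType K) (f : 'Hom(V, K^o))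
    (U : {vspace V}) y :
  y \in U -> f y != 0 -> \dim (U :&: lker f) = (\dim U).-1.
Proof.
move=> yU fy0; have := limg_ker_dim f U.
suff -> : \dim (f @: U) = 1%N by rewrite addn1 => <-.
apply/eqP; rewrite eqn_leq (leq_trans (dimvS (subvf _))) ?dimvf //=.
rewrite lt0n dimv_eq0; apply: contra fy0 => /eqP fU0.
by rewrite -memv0 -fU0 memv_img.
Qed.

Section SymmetricForm.
Variables (V : vectType Cplx) (h : V -> V -> Cplx).
Hypothesis hb : sym_bilinear_form h.

Definition hform (u : V) : V -> Cplx^o := h^~ u.

Fact hform_is_linear u : linear (hform u).
Proof. by case: hb => hlin _ a x y; rewrite /hform hlin. Qed.

Definition hform_lin u : {linear V -> Cplx^o} :=
  HB.pack (hform u) (GRing.isLinear.Build _ _ _ _ (hform u) (hform_is_linear u)).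

Lemma hsym x y : h x y = h y x. Proof. by case: hb => _ []. Qed.
Lemma hZl a x z : h (a *: x) z = a * h x z.
Proof. by rewrite -![h _ z]/(hform_lin z _) linearZ. Qed.
Lemma hDl x y z : h (x + y) z = h x z + h y z.
Proof. by rewrite -![h _ z]/(hform_lin z _) linearD. Qed.
Lemma hZr a x z : h z (a *: x) = a * h z x. Proof. by rewrite hsym hZl hsym. Qed.
Lemma hDr x y z : h z (x + y) = h z x + h z y. Proof. by rewrite hsym hDl !(hsym z). Qed.

Definition hperp (U : {vspace V}) (u : V) : {vspace V} :=
  (U :&: lker (linfun (hform_lin u)))%VS.

Lemma memv_hperp (U : {vspace V}) u w : (w \in hperp U u) = (w \in U) && (h w u == 0).
Proof. by rewrite memv_cap memv_ker lfunE. Qed.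

Lemma dim_hperp (U : {vspace V}) u y :
  y \in U -> h y u != 0 -> \dim (hperp U u) = (\dim U).-1.
Proof. by move=> yU hyu; apply: (dimv_cap_lker yU); rewrite lfunE. Qed.

Lemma sym_form_eq0 (U : {vspace V}) :
  {in U, forall x, h x x = 0} -> {in U &, forall x y, h x y = 0}.
Proof.
move=> hU0 x y xU yU; have := hU0 _ (memvD xU yU).
rewrite hDl !hDr !hU0 // add0r addr0 (hsym y x) -mulr2n -mulr_natr.
by move/eqP; rewrite mulf_eq0 pnatr_eq0 orbF => /eqP.
Qed.

(* Over C every nonzero value h x x has a square root, so anisotropic vectors
   can be normalized to h u u = 1 and split off one at a time. *)
Lemma sym_form_diag_basis (U : {vspace V}) :
  exists t : seq V, exists k, [/\ size t = \dim U, (k <= \dim U)%N, basis_of U t &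
    forall i j, (i < \dim U)%N -> (j < \dim U)%N ->
      h t`_i t`_j = ((i == j) && (i < k)%N)%:R].
Proof.
move dU: (\dim U) => m; elim: m U dU => [|m IH] U dU.
  by exists [::], 0%N; rewrite basisEfree nil_free span_nil sub0v dU.
have [[x [xU hx]] | no_aniso] := classic (exists x, x \in U /\ h x x != 0); last first.
  have hU0 : {in U, forall x, h x x = 0}.
    by move=> x xU; apply/eqP/negPn/negP => hx; apply: no_aniso; exists x.
  exists (vbasis U), 0%N; split; rewrite ?size_tuple ?dU ?vbasisP // => i j im jm.
  by rewrite andbF; apply: (sym_form_eq0 hU0); apply: vbasis_mem; apply: mem_nth;
    rewrite size_tuple dU.
pose u := (sqrtC (h x x))^-1 *: x.
have huu : h u u = 1.
  by rewrite hZl hZr mulrA -expr2 exprVn sqrtCK mulVf.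
have uU : u \in U by rewrite memvZ.
have dU' : \dim (hperp U u) = m by rewrite (dim_hperp uU) ?huu ?oner_neq0 ?dU.
have [t [k [st km bt ht]]] := IH _ dU'.
have tU' i : (i < m)%N -> t`_i \in hperp U u.
  by move=> im; rewrite -(span_basis bt) memv_span ?mem_nth ?st.
have htu i : (i < m)%N -> h t`_i u = 0.
  by move/tU'; rewrite memv_hperp => /andP[_ /eqP].
exists (u :: t), k.+1; split => /=; rewrite ?st //.
- rewrite basisEfree free_cons (basis_free bt) span_cons (span_basis bt) /= st dU.
  rewrite subv_add -memvE uU capvSl leqnn !andbT.
  by apply/negP; rewrite memv_hperp huu oner_eq0 andbF.
case=> [|i] [|j] //= im jm; [by rewrite hsym htu | by rewrite htu | by rewrite ht].
Qed.

End SymmetricForm.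

Section StructureConstants.
Variables (V : vectType Cplx) (n : nat) (b : n.-tuple V) (mul : V -> V -> V).
Variable gamma : nat -> nat -> nat -> Cplx.
Hypothesis b_basis : basis_of fullv b.
Hypothesis mulDl : forall a x1 x2 y, mul (a *: x1 + x2) y = a *: mul x1 y + mul x2 y.
Hypothesis mulDr : forall a y1 y2 x, mul x (a *: y1 + y2) = a *: mul x y1 + mul x y2.
Hypothesis mul_basis :
  forall i j l : 'I_n, coord b l (mul b`_i b`_j) = gamma i j l.

Definition coord_mul (x y : 'rV[Cplx]_n) : 'rV[Cplx]_n :=
  \row_(l < n) \sum_(i < n) \sum_(j < n) x 0 i * y 0 j * gamma i j l.

Lemma alg_iso_coord : alg_iso mul coord_mul (fun v => \row_l coord b l v).
Proof.
have b_span v : v = \sum_i coord b i v *: b`_i.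
  by apply: coord_span; rewrite (span_basis b_basis) memvf.
have mul0l y : mul 0 y = 0.
  by have := mulDl (-1) 0 0 y; rewrite scaler0 addr0 scaleN1r addNr.
have mul0r x : mul x 0 = 0.
  by have := mulDr (-1) 0 0 x; rewrite scaler0 addr0 scaleN1r addNr.
have mulZl a x y : mul (a *: x) y = a *: mul x y.
  by rewrite -[_ *: x]addr0 mulDl mul0l addr0.
have mulZr a x y : mul x (a *: y) = a *: mul x y.
  by rewrite -[_ *: y]addr0 mulDr mul0r addr0.
have mul_suml y (F : 'I_n -> V) : mul (\sum_i F i) y = \sum_i mul (F i) y.
  elim/big_rec2: _ => [|i x1 x2 _ <-]; first exact: mul0l.
  by have := mulDl 1 (F i) x2 y; rewrite !scale1r.
have mul_sumr x (F : 'I_n -> V) : mul x (\sum_i F i) = \sum_i mul x (F i).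
  elim/big_rec2: _ => [|i y1 y2 _ <-]; first exact: mul0r.
  by have := mulDr 1 (F i) y2 x; rewrite !scale1r.
split; [|split].
- by move=> a x y; apply/rowP => l; rewrite !mxE linearP.
- exists (fun r : 'rV_n => \sum_i r 0 i *: b`_i) => [v|r].
    by rewrite [RHS]b_span; apply: eq_bigr => i _; rewrite mxE.
  by apply/rowP => l; rewrite mxE coord_sum_free // (basis_free b_basis).
move=> x y; apply/rowP => l; rewrite !mxE.
rewrite {1}(b_span x) {1}(b_span y) mul_suml linear_sum; apply: eq_bigr => i _.
rewrite mulZl mul_sumr linearZ linear_sum /= big_distrr; apply: eq_bigr => j _.
by rewrite !mxE mulZr linearZ /= mul_basis mulrA.
Qed.

End StructureConstants.

Section HcAlgebra.
Variables (V : vectType Cplx) (h : V -> V -> Cplx) (c : V).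
Hypotheses (hb : sym_bilinear_form h) (hcc : h c c = 0).
Local Notation "x ⋆ y" := (hc_mul h c x y) (at level 40, left associativity).

Lemma hc_mulDl a x1 x2 y : (a *: x1 + x2) ⋆ y = a *: (x1 ⋆ y) + x2 ⋆ y.
Proof.
rewrite /hc_mul (hDl hb) (hZl hb) scalerDr scalerDl !scalerDr !scalerA.
by rewrite [a * - _]mulrC addrACA.
Qed.

Lemma hc_mulDr a y1 y2 x : x ⋆ (a *: y1 + y2) = a *: (x ⋆ y1) + x ⋆ y2.
Proof.
rewrite /hc_mul (hDl hb) (hZl hb) (hDr hb) (hZr hb) opprD -mulrN.
by rewrite !scalerDl !scalerDr !scalerA addrACA.
Qed.

Lemma hc_mul_c_l y : c ⋆ y = 0.
Proof. by rewrite /hc_mul (hsym hb) scaleNr addNr. Qed.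

(* Shifting a vector with h(e, c) = -1 along the isotropic c kills h(e, e). *)
Lemma exists_hyperbolic_partner :
  (exists x, h x c != 0) -> exists e, h e c = -1 /\ h e e = 0.
Proof.
case=> x hx0; have [e0 he0c] : exists e0, h e0 c = -1.
  by exists (- (h x c)^-1 *: x); rewrite (hZl hb) mulNr mulVf.
exists (e0 + (h e0 e0 / 2) *: c); split.
  by rewrite (hDl hb) (hZl hb) hcc mulr0 addr0.
rewrite (hDl hb) !(hDr hb) !(hZl hb) !(hZr hb) hcc (hsym hb c e0) he0c.
have two_neq0 : (2 : Cplx) != 0 by rewrite pnatr_eq0.
by field.
Qed.

Variable e : V.
Hypotheses (hec : h e c = -1) (hee : h e e = 0).

Lemma hc_mul_e_c : e ⋆ c = - c.
Proof. by rewrite /hc_mul hcc hec oppr0 scale0r add0r scaleN1r. Qed.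

Lemma hc_mul_e_e : e ⋆ e = e.
Proof. by rewrite /hc_mul hec hee scale0r addr0 opprK scale1r. Qed.

Definition hc_perp : {vspace V} := hperp hb (hperp hb fullv c) e.

Lemma memv_hc_perp w : w \in hc_perp -> h w c = 0 /\ h w e = 0.
Proof. by rewrite !memv_hperp memvf => /andP[/eqP-> /eqP->]. Qed.

Lemma dim_hc_perp : \dim hc_perp = (\dim {:V}).-2.
Proof.
have ce_neq0 : h c e != 0 by rewrite (hsym hb) hec oppr_eq0 oner_eq0.
have ec_neq0 : h e c != 0 by rewrite hec oppr_eq0 oner_eq0.
have c_perp : c \in hperp hb fullv c by rewrite memv_hperp memvf hcc eqxx.
by rewrite (dim_hperp hb c_perp ce_neq0) (dim_hperp hb (memvf e) ec_neq0).
Qed.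

Section Perp.
Variable w : V.
Hypothesis w_perp : w \in hc_perp.

Lemma hc_mul_e_perp : e ⋆ w = 0.
Proof.
have [wc we] := memv_hc_perp w_perp.
by rewrite /hc_mul wc (hsym hb) we oppr0 !scale0r addr0.
Qed.

Lemma hc_mul_perp_c : w ⋆ c = 0.
Proof.
by have [wc _] := memv_hc_perp w_perp; rewrite /hc_mul hcc wc oppr0 !scale0r addr0.
Qed.

Lemma hc_mul_perp_e : w ⋆ e = w.
Proof.
have [_ we] := memv_hc_perp w_perp.
by rewrite /hc_mul hec we opprK scale0r addr0 scale1r.
Qed.

Lemma hc_mul_perp w' : w' ⋆ w = h w' w *: c.
Proof.
by have [wc _] := memv_hc_perp w_perp; rewrite /hc_mul wc oppr0 scale0r add0r.
Qed.

End Perp.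

Variables (k : nat) (t : seq V).
Hypothesis t_basis : basis_of hc_perp t.
Hypothesis ht : forall i j, (i < size t)%N -> (j < size t)%N ->
  h t`_i t`_j = ((i == j) && (i < k)%N)%:R.

Lemma t_perp i : (i < size t)%N -> t`_i \in hc_perp.
Proof. by move=> it; rewrite -(span_basis t_basis) memv_span ?mem_nth. Qed.

Lemma free_hc_basis : free [:: c, e & t].
Proof.
have neg1_neq0 : (-1 : Cplx) != 0 by rewrite oppr_eq0 oner_eq0.
rewrite !free_cons (basis_free t_basis) span_cons (span_basis t_basis) andbT.
apply/andP; split.
  apply/memv_addP => -[_ /vlineP[a ->] [w /memv_hc_perp[_ we] c_eq]].
  have := hec; rewrite (hsym hb) c_eq (hDl hb) (hZl hb) hee we mulr0 addr0.
  by move/eqP; rewrite eq_sym (negPf neg1_neq0).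
by apply/negP => /memv_hc_perp[]; rewrite hec => /eqP; rewrite (negPf neg1_neq0).
Qed.

Lemma basis_hc_basis : (2 <= \dim {:V})%N -> basis_of fullv [:: c, e & t].
Proof.
move=> dimV2; rewrite basisEfree free_hc_basis subvf /=.
have st : size t = \dim hc_perp.
  by rewrite (@size_basis _ _ _ _ (in_tuple t) t_basis).
by rewrite st dim_hc_perp; lia.
Qed.

Lemma coord_hc_mul (i j l : 'I_(size t).+2) :
  coord (in_tuple [:: c, e & t]) l ((c :: e :: t)`_i ⋆ (c :: e :: t)`_j)
  = gamma5 k i j l.
Proof.
set b := in_tuple _.
have coord_b (m : nat) : (m < (size t).+2)%N -> coord b l b`_m = (m == l)%:R.
  by move=> mt; have := @coord_free _ _ _ b (Ordinal mt) l free_hc_basis.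
have coord_c : coord b l c = (0 == l :> nat)%:R := coord_b 0%N isT.
have coord_e : coord b l e = (1 == l :> nat)%:R := coord_b 1%N isT.
have coordN v : coord b l (- v) = - coord b l v by rewrite linearN.
have coordZ a v : coord b l (a *: v) = a * coord b l v by rewrite linearZ.
case: i => -[|[|i]] /= it.
- by rewrite hc_mul_c_l linear0 /gamma5.
- case: j => -[|[|j]] /= jt.
  + rewrite hc_mul_e_c coordN coord_c /gamma5 /=.
    by case: (nat_of_ord l) => [|l'] /=; rewrite ?oppr0.
  + by rewrite hc_mul_e_e coord_e /gamma5 /=; case: (nat_of_ord l) => [|[|l']].
  + by rewrite hc_mul_e_perp ?t_perp ?linear0 // /gamma5.
- have ti_perp : t`_i \in hc_perp by rewrite t_perp.
  case: j => -[|[|j]] /= jt.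
  + by rewrite hc_mul_perp_c ?linear0 // /gamma5 /=.
  + rewrite hc_mul_perp_e // (coord_b i.+2) // /gamma5 /= eq_sym.
    by case: eqP.
  + rewrite hc_mul_perp ?t_perp // coordZ coord_c ht // /gamma5 /=.
    case: (nat_of_ord l) => [|l'] /=; rewrite ?mulr0 ?mulr1 ?andbT ?andbF //.
    by case: (_ && _).
Qed.

End HcAlgebra.

Unset Implicit Arguments.
Set Strict Implicit.

Theorem proposition3p8 (n : nat) (V : vectType Cplx) (h : V -> V -> Cplx) (c : V) :
  (2 <= n)%N ->
  \dim (fullv : {vspace V}) = n ->
  sym_bilinear_form h ->
  h c c = 0 ->
  (exists x : V, h x c != 0) ->
  exists k : nat, (k <= n - 2)%N /\
    exists f : V -> 'rV[Cplx]_n, alg_iso (hc_mul h c) (@mulA5 n k) f.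
Proof.
move=> n2 dimV hb hcc /(exists_hyperbolic_partner hb hcc) [e [hec hee]].
have [t [k [st kle t_basis ht]]] := sym_form_diag_basis hb (hc_perp c hb e).
rewrite -st in ht; rewrite (dim_hc_perp hb hcc hec) dimV in st kle.
exists k; split; first by rewrite subn2.
have -> : n = (size t).+2 by rewrite st; lia.
exists (fun v => \row_l coord (in_tuple [:: c, e & t]) l v).
apply: alg_iso_coord.
- by apply: (basis_hc_basis hcc hec hee t_basis); rewrite dimV.
- exact: hc_mulDl.
- exact: hc_mulDr.
- exact: (coord_hc_mul hcc hec hee t_basis ht).
Qed.
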